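(* Let $\mathcal{X}=[0,1]^2$, let $\mathcal{G}$ be the class of monotone allocations and $\{\mathcal{G}_k\}_{k\ge1}$ the piecewise-linear monotone sieve defined in the context. Fix $M<\infty$, $\kappa\in(0,1/2)$, $A>0$, and let $\mathcal{P}_r$ be the set of distributions under which $X$ has a density with respect to Lebesgue measure on $[0,1]^2$ bounded above by $A$. Then $$\sup_{P\in\mathcal{P}_r\cap\mathcal{P}(M,\kappa)}\big(W^*_{\mathcal{G}}-W^*_{\mathcal{G}_k}\big)\le A\frac{M}{\kappa}2^{-k}\quad\text{for every }k\ge1.$$
   Context: $P$ is the distribution of $(Y,D,X)$ with outcome $Y\in\mathbb{R}$, treatment $D\in\{0,1\}$, covariate $X=(X_1,X_2)\in[0,1]^2$; $e(x)=E_P[D\mid X=x]$. $\mathcal{P}(M,\kappa)$: distributions with support of $Y$ in $[-M/2,M/2]$ and $e(x)\in[\kappa,1-\kappa]$ for all $x$. Welfare: $W(G)=E_P[(\frac{YD}{e(X)}-\frac{Y(1-D)}{1-e(X)})\mathbf{1}\{X\in G\}]$, $W^*_{\mathcal{A}}=\sup_{G\in\mathcal{A}}W(G)$. Monotone allocations: $\mathcal{G}=\{\{(x_1,x_2)\in[0,1]^2:x_2\le f(x_1)\}: f:[0,1]\to[0,1]\text{ non-increasing}\}$. Sieve: for an integer $T$ and $0\le j\le T$, $\psi_{T,j}(x)=1-|Tx-j|$ for $x\in[\frac{j-1}{T},\frac{j+1}{T}]\cap[0,1]$ and $0$ otherwise; with $T=2^{k-1}$, $\mathcal{G}_k=\{\{(x_1,x_2)\in[0,1]^2:x_2\le\sum_{j=0}^T\theta_j\psi_{T,j}(x_1)\}:\theta_0\ge\theta_1\ge\dots\ge\theta_T,\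 \theta_j\in\mathbb{R}\}$ (allocations whose boundary is a non-increasing piecewise-linear function with kinks only at the points $j/T$). *)

From HB Require Import structures.
From mathcomp Require Import all_boot all_order all_algebra.
From mathcomp Require Import all_classical all_reals all_analysis.
Set Implicit Arguments. Unset Strict Implicit. Unset Printing Implicit Defensive.
Import Order.TTheory GRing.Theory Num.Theory.
Import numFieldNormedType.Exports.
Local Open Scope classical_set_scope.
Local Open Scope ring_scope.

Section Defs.
Context {R : realType}.

Definition unit_sq : set (R * R) :=
  [set x | (0 <= x.1 <= 1) /\ (0 <= x.2 <= 1)].

Definition psi (T j : nat) (x : R) : R :=
  if ((j%:R - 1) / T%:R <= x <= (j%:R + 1) / T%:R) && (0 <= x <= 1)
  then 1 - `|T%:R * x - j%:R| else 0.

Definition monotone_allocs : set (set (R * R)) :=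
  [set G | exists f : R -> R,
     (forall a b, 0 <= a -> a <= b -> b <= 1 -> f b <= f a) /\
     (forall a, 0 <= a <= 1 -> 0 <= f a <= 1) /\
     G = [set x | unit_sq x /\ x.2 <= f x.1]].

Definition sieve_allocs (k : nat) : set (set (R * R)) :=
  let T := (2 ^ (k.-1))%N in
  [set G | exists theta : nat -> R,
     (forall j, (j < T)%N -> theta j.+1 <= theta j) /\
     G = [set x | unit_sq x /\
                  x.2 <= \sum_(0 <= j < T.+1) theta j * psi T j x.1]].

Definition welfare {d} {Om : measurableType d} (P : probability Om R)
  (Y D : Om -> R) (X : Om -> R * R) (e : R * R -> R) (G : set (R * R)) : \bar R :=
  (\int[P]_w ((Y w * D w / e (X w) - Y w * (1 - D w) / (1 - e (X w)))
               * \1_G (X w))%:E)%E.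

Definition opt_welfare {d} {Om : measurableType d} (P : probability Om R)
  (Y D : Om -> R) (X : Om -> R * R) (e : R * R -> R) (Alloc : set (set (R * R)))
  : \bar R :=
  ereal_sup [set welfare P Y D X e G | G in Alloc].

End Defs.

From HB Require Import structures.
From mathcomp Require Import all_boot all_order all_algebra.
From mathcomp Require Import all_classical all_reals all_analysis.
From mathcomp Require Import lra zify ring.
From mathcomp Require Import measurable_realfun.
Set Implicit Arguments.
Unset Strict Implicit.
Unset Printing Implicit Defensive.
Import Order.TTheory GRing.Theory Num.Theory.
Import numFieldNormedType.Exports.
Local Open Scope classical_set_scope.
Local Open Scope ring_scope.

(* For a monotone boundary [f], let [g] be the piecewise-linear interpolant of
   [f] at the grid points [j/T], [T = 2^(k-1)]; the subgraph of [g] lies in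
   [G_k].  On a cell [[j/T, (j+1)/T]] both [f] and [g] take values between
   [f((j+1)/T)] and [f(j/T)], so the two subgraphs differ only inside the boxes
   [[j/T, (j+1)/T] x [f((j+1)/T), f(j/T)]].  Their total area is
   [(f 0 - f 1) / T <= 1/T], hence their probability is at most [A/T], and the
   IPW integrand is almost surely bounded by [M/(2 kappa)]; therefore
   [W(G_f) <= W(G_g) + A (M/kappa) 2^-k]. *)

Definition hat_interp {R : realType} (T : nat) (theta : nat -> R) (x : R) : R :=
  \sum_(0 <= j < T.+1) theta j * psi T j x.

Definition grid_interp {R : realType} (T : nat) (f : R -> R) : R -> R :=
  hat_interp T (fun j => f (j%:R / T%:R)).

Definition grid_cell {R : realType} (T : nat) (f : R -> R) (j : nat) :
    set (R * R) :=
  [set` `[j%:R / T%:R, j.+1%:R / T%:R]] `*`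
  [set` `[f (j.+1%:R / T%:R), f (j%:R / T%:R)]].

Definition unit_subgraph {R : realType} (phi : R -> R) : set (R * R) :=
  [set x | unit_sq x /\ x.2 <= phi x.1].

Section HatFunctions.
Context {R : realType}.
Variable T : nat.
Hypothesis T_gt0 : (0 < T)%N.

Let T_gt0R : (0 : R) < T%:R. Proof. by rewrite ltr0n. Qed.

Lemma psi_cell_far (i j : nat) (x : R) : i != j -> i != j.+1 ->
  j%:R <= T%:R * x <= j%:R + 1 -> psi T i x = 0.
Proof.
move=> ij ij1 /andP[jx xj]; rewrite /psi.
case: ifP => // /andP[/andP[ix xi] _].
rewrite ler_pdivrMr // in ix; rewrite ler_pdivlMr // in xi.
have [lt_ij|le_ji] := ltnP i j.
  have : (i.+1 <= j)%N by [].
  rewrite -(ler_nat R) -natr1 => Sij.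
  have -> : T%:R * x - i%:R = 1 by lra.
  by rewrite normr1 subrr.
have : (j.+2 <= i)%N by rewrite ltn_neqAle eq_sym ij1 ltn_neqAle eq_sym ij le_ji.
rewrite -(ler_nat R) -addn2 natrD => SSji.
have -> : T%:R * x - i%:R = -1 by lra.
by rewrite normrN1 subrr.
Qed.

Lemma psi_cell_left (j : nat) (x : R) : 0 <= x <= 1 ->
  j%:R <= T%:R * x <= j%:R + 1 -> psi T j x = 1 - (T%:R * x - j%:R).
Proof.
move=> x01 /andP[jx xj]; rewrite /psi x01 ler_pdivrMr // ler_pdivlMr // andbT.
rewrite ifT; last by apply/andP; split; lra.
by rewrite ger0_norm //; lra.
Qed.

Lemma psi_cell_right (j : nat) (x : R) : 0 <= x <= 1 ->
  j%:R <= T%:R * x <= j%:R + 1 -> psi T j.+1 x = T%:R * x - j%:R.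
Proof.
move=> x01 /andP[jx xj].
rewrite /psi x01 ler_pdivrMr // ler_pdivlMr // andbT -natr1.
rewrite ifT; last by apply/andP; split; lra.
by rewrite ler0_norm; lra.
Qed.

Lemma exists_cell (x : R) : 0 <= x <= 1 ->
  exists2 j, (j < T)%N & j%:R <= T%:R * x <= j%:R + 1.
Proof.
move=> /andP[x0 x1].
have Tx0 : 0 <= T%:R * x by rewrite mulr_ge0 // ltW.
have := truncn_itv Tx0; set n := Num.truncn _ => /andP[nTx Txn].
have [nT|Tn] := ltnP n T.
  by exists n => //; rewrite -natr1 in Txn; apply/andP; split; lra.
exists T.-1; first by rewrite prednK.
have TxT : T%:R * x <= T%:R by rewrite -[leRHS]mulr1 ler_pM2l.
have Tn' : (T%:R : R) <= n%:R by rewrite ler_nat.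
have predT : (T.-1%:R : R) + 1 = T%:R by rewrite natr1 prednK.
by apply/andP; split; lra.
Qed.

Lemma hat_interp_cellE (theta : nat -> R) (j : nat) (x : R) : (j < T)%N ->
  0 <= x <= 1 -> j%:R <= T%:R * x <= j%:R + 1 ->
  hat_interp T theta x =
    theta j * (1 - (T%:R * x - j%:R)) + theta j.+1 * (T%:R * x - j%:R).
Proof.
move=> jT x01 xj; rewrite /hat_interp (big_cat_nat _ (n := j)) //=; last by lia.
rewrite [X in _ + X]big_ltn; last by lia.
rewrite [X in _ + (_ + X)]big_ltn; last by lia.
rewrite big_nat_cond big1 => [|i /andP[/andP[_ ij] _]]; last first.
  by rewrite (@psi_cell_far i j) ?mulr0 //; lia.
rewrite big_nat_cond big1 => [|i /andP[/andP[ji _] _]]; last first.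
  by rewrite (@psi_cell_far i j) ?mulr0 //; lia.
by rewrite psi_cell_left // psi_cell_right // add0r addr0.
Qed.

Lemma hat_interp_between (theta : nat -> R) (j : nat) (x : R) : (j < T)%N ->
  theta j.+1 <= theta j -> 0 <= x <= 1 -> j%:R <= T%:R * x <= j%:R + 1 ->
  theta j.+1 <= hat_interp T theta x <= theta j.
Proof.
move=> jT theta_j x01 xj; rewrite (hat_interp_cellE theta jT x01 xj).
have /andP[t0 t1] : 0 <= T%:R * x - j%:R <= 1.
  by case/andP: xj => ? ?; apply/andP; split; lra.
by apply/andP; split; nra.
Qed.

Lemma grid_itv (j : nat) : (j <= T)%N -> 0 <= (j%:R / T%:R : R) <= 1.
Proof.
move=> jT; apply/andP; split; first by rewrite divr_ge0 ?ler0n ?ltW.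
by rewrite ler_pdivrMr // mul1r ler_nat.
Qed.

Section MonotoneInterpolation.
Variable f : R -> R.
Hypothesis f_noninc : forall a b, 0 <= a -> a <= b -> b <= 1 -> f b <= f a.

Lemma grid_noninc (j : nat) : (j < T)%N ->
  f (j.+1%:R / T%:R) <= f (j%:R / T%:R).
Proof.
move=> jT; have /andP[j0 _] := grid_itv (ltnW jT).
have /andP[_ j1] := grid_itv jT.
by apply: f_noninc => //; rewrite ler_pM2r ?invr_gt0 // ler_nat.
Qed.

Lemma interp_subgraph_neq_cell (a b : R) : 0 <= a <= 1 ->
  (b <= f a) != (b <= grid_interp T f a) ->
  exists2 j, (j < T)%N & grid_cell T f j (a, b).
Proof.
move=> a01 neq; have [j jT ja] := exists_cell a01.
have /andP[g_lo g_hi] := @hat_interp_between (fun j => f (j%:R / T%:R)) j a jT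
  (grid_noninc jT) a01 ja.
exists j => //; move: ja a01 => /andP[ja aj] /andP[a0 a1].
have a_lo : j%:R / T%:R <= a by rewrite ler_pdivrMr // mulrC.
have a_hi : a <= j.+1%:R / T%:R by rewrite ler_pdivlMr // -natr1 mulrC.
have /andP[grid_j0 _] := grid_itv (ltnW jT); have /andP[_ grid_j1] := grid_itv jT.
have fa_lo : f (j.+1%:R / T%:R) <= f a by apply: f_noninc.
have fa_hi : f a <= f (j%:R / T%:R) by apply: f_noninc.
split; rewrite /= in_itv /= ?a_lo ?a_hi //.
move: neq; rewrite /grid_interp; set g := hat_interp _ _ _ in g_lo g_hi *.
by case: (lerP b (f a)) => bf; case: (lerP b g) => bg //= _; apply/andP; split;
  lra.
Qed.

End MonotoneInterpolation.
End HatFunctions.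

Lemma unit_subgraph_neq_cell {R : realType} (T : nat) (f : R -> R) (x : R * R) :
  (0 < T)%N -> (forall a b, 0 <= a -> a <= b -> b <= 1 -> f b <= f a) ->
  (x \in unit_subgraph f) != (x \in unit_subgraph (grid_interp T f)) ->
  exists2 j, (j < T)%N & grid_cell T f j x.
Proof.
move=> T_gt0 f_noninc; have [xU | xU] := pselect (unit_sq x); last first.
  have not_mem phi : (x \in unit_subgraph phi) = false.
    by apply: negbTE; rewrite notin_setE => -[/xU].
  by rewrite !not_mem.
have memE phi : (x \in unit_subgraph phi) = (x.2 <= phi x.1).
  by apply/idP/idP => [/set_mem[] // | le]; exact/mem_set.
have [x1 _] := xU; case: x x1 {xU} memE => a b /= a01 memE.
by rewrite !memE; exact: interp_subgraph_neq_cell.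
Qed.

Section Measurability.
Context {R : realType}.

Lemma measurable_unit_sq : measurable (unit_sq : set (R * R)).
Proof.
have -> : unit_sq = [set` `[0:R, 1]] `*` [set` `[0:R, 1]].
  by apply/seteqP; split => -[a b]; rewrite /unit_sq /= !in_itv.
by apply: measurableX; exact: measurable_itv.
Qed.

Lemma measurable_unit_subgraph (phi : R -> R) : measurable_fun setT phi ->
  measurable (unit_subgraph phi).
Proof.
move=> mphi; apply: measurable_fun_le measurable_unit_sq _ _.
  exact: measurable_funTS measurable_snd.
by apply: measurable_funTS; exact: measurableT_comp mphi measurable_fst.
Qed.

Lemma measurable_psi (T j : nat) : measurable_fun setT (@psi R T j).
Proof.
pose S := [set` `[(j%:R - 1) / T%:R, (j%:R + 1) / T%:R]] `&` [set` `[0:R, 1]].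
have -> : @psi R T j = (fun x => \1_S x * (1 - `|T%:R * x - j%:R|)).
  apply/funext => x; rewrite /psi indicE /S.
  have -> : (x \in S) =
      ((j%:R - 1) / T%:R <= x <= (j%:R + 1) / T%:R) && (0 <= x <= 1).
    apply/idP/idP; rewrite inE /S /= !in_itv /=.
      by case=> -> ->.
    by case/andP=> -> ->.
  by case: ifP; rewrite ?mul1r ?mul0r.
apply: measurable_funM.
  by apply: measurable_indic; apply: measurableI; exact: measurable_itv.
apply: measurable_funB; first exact: measurable_cst.
apply: measurableT_comp; first exact: normr_measurable.
by apply: measurable_funB => //; apply: measurable_funM.
Qed.

Lemma measurable_hat_interp (T : nat) (theta : nat -> R) :
  measurable_fun setT (hat_interp T theta).
Proof.
apply: measurable_sum => j; apply: measurable_funM => //.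
exact: measurable_psi.
Qed.

(* Outside [0,1] the function [f] is irrelevant, so we may replace it by
   [f] composed with the projection onto [0,1], which is nonincreasing on R. *)
Lemma measurable_monotone_subgraph (f : R -> R) :
  (forall a b, 0 <= a -> a <= b -> b <= 1 -> f b <= f a) ->
  measurable (unit_subgraph f).
Proof.
move=> f_noninc; pose clamp a : R := Num.min 1 (Num.max 0 a).
have clamp_id a : 0 <= a <= 1 -> clamp a = a.
  by move=> /andP[a0 a1]; rewrite /clamp (max_r a0) (min_r a1).
have -> : unit_subgraph f = unit_subgraph (f \o clamp).
  by apply/seteqP; split => -[a b] [[a01 b01] fab]; split => //=;
    rewrite /= ?clamp_id in fab *.
apply: measurable_unit_subgraph.
apply: nonincreasing_measurable => // a b ab /=.
apply: f_noninc; first by rewrite le_min ler01 le_max lexx.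
  by rewrite le_min2 // le_max2.
by rewrite ge_min lexx.
Qed.

End Measurability.

Lemma lebesgue_measure_itvcc {R : realType} (a b : R) : a <= b ->
  lebesgue_measure [set` `[a, b]] = (b - a)%:E.
Proof.
move=> ab; rewrite lebesgue_measure_itv /= lte_fin.
by case: ltgtP ab => // -> _; rewrite subrr.
Qed.

Lemma probability_setCI_eq0 d (T : measurableType d) (R : realType)
    (P : probability T R) (E1 E2 : set T) : measurable E1 -> measurable E2 ->
  P E1 = 1%E -> P E2 = 1%E -> P (~` (E1 `&` E2)) = 0%E.
Proof.
move=> mE1 mE2 PE1 PE2; apply/eqP; rewrite -measure_le0 setCI.
have PC1 : P (~` E1) = 0%E by rewrite probability_setC // PE1 subee.
have PC2 : P (~` E2) = 0%E by rewrite probability_setC // PE2 subee.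
have sum_le0 (x y : \bar R) : x = 0%E -> y = 0%E -> (x + y <= 0)%E.
  by move=> -> ->; rewrite adde0.
apply: le_trans (measureU2 _ _ _) _; try exact: measurableC.
by apply: sum_le0; [exact: PC1 | exact: PC2].
Qed.

Lemma leeBlDr_EFin {R : realType} (x y : \bar R) (r : R) :
  (x <= y + r%:E)%E -> (x - y <= r%:E)%E.
Proof.
case: y => [y | |] xy; first by rewrite leeBlDr // addeC.
  by rewrite addeNy leNye.
by move: xy; rewrite addNye leeNy_eq => /eqP ->; rewrite addNye leNye.
Qed.

Section NullSetIntegral.
Context d (T : measurableType d) (R : realType) (mu : {measure set T -> \bar R}).

Lemma ae_le_integral (N : set T) (f g : T -> \bar R) : measurable N ->
  mu N = 0%E -> mu.-integrable setT f -> mu.-integrable setT g ->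
  (forall x, ~ N x -> (f x <= g x)%E) ->
  (\int[mu]_x f x <= \int[mu]_x g x)%E.
Proof.
move=> mN muN0 intf intg fg.
rewrite (negligible_integral mN measurableT intf muN0).
rewrite (negligible_integral mN measurableT intg muN0).
have mTN : measurable (setT `\` N) by exact: measurableD.
apply: le_integral => //.
- exact: (integrableS measurableT _ (@subsetT _ _) intf).
- exact: (integrableS measurableT _ (@subsetT _ _) intg).
- by move=> x; rewrite inE => -[_ /fg].
Qed.

Lemma integral_sum_indic (c : R) (Q : nat -> set T) (n : nat) : 0 <= c ->
  (forall j, measurable (Q j)) ->
  (\int[mu]_x (c * \sum_(0 <= j < n) \1_(Q j) x)%:E =
    c%:E * \sum_(0 <= j < n) mu (Q j))%E.
Proof.
move=> c0 mQ; under eq_integral do rewrite EFinM -sumEFin.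
rewrite ge0_integralZl //; last 2 first.
- by apply: emeasurable_sum => j; apply/measurable_EFinP; exact: measurable_indic.
- by move=> x _; apply: sume_ge0 => j _; rewrite lee_fin.
rewrite ge0_integral_sum //; last first.
  by move=> j; apply/measurable_EFinP; exact: measurable_indic.
by congr (_ * _)%E; apply: eq_bigr => j _; rewrite integral_indic // setIT.
Qed.

End NullSetIntegral.

Section BoundedIntegrand.
Context d (Om : measurableType d) (R : realType) (P : probability Om R).
Variables (N : set Om) (c : R).
Hypotheses (mN : measurable N) (PN0 : P N = 0%E) (c_ge0 : 0 <= c).

Lemma integrable_ae_bounded (h : Om -> R) : measurable_fun setT h ->
  (forall w, ~ N w -> `|h w| <= c) -> P.-integrable setT (EFin \o h).
Proof.
move=> mh h_bounded; apply/integrableP; split; first exact/measurable_EFinP.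
apply: le_lt_trans (integral_le_bound (c%:E) _ _ _ _) _ => //.
- exact/measurable_EFinP.
- exists N; split => // w /= hw; apply: contra_notP hw => Nw _.
  by rewrite lee_fin; exact: h_bounded.
rewrite lte_mul_pinfty ?lee_fin //.
by rewrite (le_lt_trans (probability_le1 P measurableT)) ?ltry.
Qed.

Lemma integral_mul_indic_le (h : Om -> R) (S S' : set Om) (Q : nat -> set Om)
    (n : nat) :
  measurable_fun setT h -> (forall w, ~ N w -> `|h w| <= c) ->
  measurable S -> measurable S' -> (forall j, measurable (Q j)) ->
  (forall w, (w \in S) != (w \in S') -> exists2 j, (j < n)%N & Q j w) ->
  (\int[P]_w (h w * \1_S w)%:E <=
     \int[P]_w (h w * \1_S' w)%:E + c%:E * \sum_(0 <= j < n) P (Q j))%E.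
Proof.
move=> mh h_bounded mS mS' mQ SS'_cover.
have int_h_indic A : measurable A ->
    P.-integrable setT (EFin \o (fun w => h w * \1_A w)).
  move=> mA; apply: integrable_ae_bounded.
    by apply: measurable_funM => //; exact: measurable_indic.
  move=> w Nw; rewrite normrM indicE.
  by case: (w \in A); rewrite ?normr1 ?normr0 ?mulr1 ?mulr0 //; exact: h_bounded.
pose cover w := c * \sum_(0 <= j < n) \1_(Q j) w.
have cover_ge0 w : 0 <= cover w.
  by rewrite mulr_ge0 // sumr_ge0 // => j _; rewrite indicE ler0n.
have int_cover : P.-integrable setT (EFin \o cover).
  apply/integrableP; split.
    apply/measurable_EFinP; apply: measurable_funM => //.
    by apply: measurable_sum => j; exact: measurable_indic.
  under eq_integral do rewrite /= ger0_norm //.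
  rewrite integral_sum_indic // lte_mul_pinfty ?lee_fin ?fin_numE //.
  apply: lte_sum_pinfty => j _.
  by rewrite (le_lt_trans (probability_le1 P (mQ j))) ?ltry.
rewrite -integral_sum_indic // -integralD_EFin //; last exact: int_h_indic.
apply: (ae_le_integral mN PN0); first exact: int_h_indic.
  by apply: integrableD => //; exact: int_h_indic.
move=> w Nw /=; rewrite lee_fin.
have := h_bounded w Nw; rewrite ler_norml => /andP[hlo hhi].
have [neq|] := boolP ((w \in S) != (w \in S')); last first.
  by rewrite negbK !indicE => /eqP ->; rewrite lerDl; exact: cover_ge0.
have [j jn Qj] := SS'_cover w neq.
have cover_ge_c : c <= cover w.
  rewrite /cover -[leLHS]mulr1 ler_wpM2l // big_mkord (bigD1 (Ordinal jn)) //=.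
  rewrite indicE mem_set // lerDl.
  by apply: sumr_ge0 => i _; rewrite indicE ler0n.
move: cover_ge_c neq; rewrite /cover !indicE.
by case: (w \in S); case: (w \in S') => //= ? _; rewrite ?mulr1 ?mulr0; lra.
Qed.

End BoundedIntegrand.

Section BoundedDensity.
Context d (Om : measurableType d) (R : realType) (P : probability Om R).
Variables (X : Om -> R * R) (A : R) (dens : R * R -> R).
Hypothesis mdens : measurable_fun setT dens.
Hypothesis dens_bounded : forall x, 0 <= dens x <= A.
Hypothesis PX_density : forall B : set (R * R), measurable B ->
  P (X @^-1` B) =
  (\int[(@lebesgue_measure R \x @lebesgue_measure R)%E]_(x in B `&` unit_sq)
     (dens x)%:E)%E.

Let A_ge0 : 0 <= A.
Proof. by have /andP[/le_trans] := dens_bounded (0, 0); apply. Qed.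

Lemma prob_rect_le (a b c e : R) : a <= b -> c <= e ->
  (P (X @^-1` ([set` `[a, b]] `*` [set` `[c, e]])) <=
     (A * ((b - a) * (e - c)))%:E)%E.
Proof.
move=> ab ce; set B := _ `*` _.
have mB : measurable B by apply: measurableX; exact: measurable_itv.
have mBU : measurable (B `&` unit_sq).
  by apply: measurableI => //; exact: measurable_unit_sq.
rewrite PX_density //.
apply: (@le_trans _ _
  (\int[(lebesgue_measure \x lebesgue_measure)%E]_(x in B `&` unit_sq) A%:E)%E).
  apply: ge0_le_integral => //.
  - by move=> x _; rewrite lee_fin; case/andP: (dens_bounded x).
  - by apply/measurable_EFinP; exact: measurable_funTS.
  - by move=> x _; rewrite lee_fin; case/andP: (dens_bounded x).
rewrite integral_cst // EFinM lee_wpmul2l ?lee_fin //.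
apply: (@le_trans _ _ ((lebesgue_measure \x lebesgue_measure)%E B)).
  by apply: le_measure; rewrite ?inE // => x [].
rewrite product_measure1E; try exact: measurable_itv.
rewrite EFinM -(lebesgue_measure_itvcc ab) -(lebesgue_measure_itvcc ce).
exact: lexx.
Qed.

Lemma grid_cells_prob_le (T : nat) (f : R -> R) : (0 < T)%N ->
  (forall a b, 0 <= a -> a <= b -> b <= 1 -> f b <= f a) ->
  (forall a, 0 <= a <= 1 -> 0 <= f a <= 1) ->
  (\sum_(0 <= j < T) P (X @^-1` grid_cell T f j) <= (A / T%:R)%:E)%E.
Proof.
move=> T_gt0 f_noninc f01; have T_gt0R : (0 : R) < T%:R by rewrite ltr0n.
pose th j := f (j%:R / T%:R).
apply: (@le_trans _ _
  (\sum_(0 <= j < T) (A * (T%:R^-1 * (th j - th j.+1)))%:E)%E).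
  rewrite big_nat_cond [leRHS]big_nat_cond.
  apply: lee_sum => j /andP[/andP[_ jT] _].
  rewrite -[T%:R^-1](_ : j.+1%:R / T%:R - j%:R / T%:R = _); last first.
    by rewrite -natr1 mulrDl mul1r addrAC subrr add0r.
  apply: prob_rect_le; last exact: grid_noninc.
  by rewrite ler_pM2r ?invr_gt0 // ler_nat.
have telescope : \sum_(0 <= j < T) (th j - th j.+1) = th 0%N - th T.
  rewrite -opprB -(telescope_sumr _ (leq0n T)) -sumrN.
  by apply: eq_bigr => j _; rewrite opprB.
rewrite sumEFin lee_fin -!big_distrr /= telescope.
rewrite ler_wpM2l // -[leRHS]mulr1 ler_wpM2l ?invr_ge0 ?ler0n //.
have /andP[_ th0] := f01 _ (grid_itv T_gt0 (leq0n T)).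
have /andP[thT _] := f01 _ (grid_itv T_gt0 (leqnn T)).
by rewrite /th in th0 thT *; lra.
Qed.

End BoundedDensity.

Definition ipw_score d (Om : measurableType d) (R : realType) (Y D : Om -> R)
    (X : Om -> R * R) (e : R * R -> R) (w : Om) : R :=
  Y w * D w / e (X w) - Y w * (1 - D w) / (1 - e (X w)).

Lemma ipw_score_le {R : realType} (M kappa y t p : R) : 0 < kappa ->
  `|y| <= M / 2 -> t = 0 \/ t = 1 -> kappa <= p <= 1 - kappa ->
  `|y * t / p - y * (1 - t) / (1 - p)| <= M / 2 / kappa.
Proof.
move=> kappa_gt0 yM t01 /andP[kp pk].
have kappa_inv q : kappa <= q -> `|q^-1| <= kappa^-1.
  by move=> kq; rewrite ger0_norm ?invr_ge0 ?lef_pV2 ?posrE //; lra.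
case: t01 => ->; rewrite ?(mulr0, mul0r, subr0, sub0r, subrr, mulr1, normrN).
  by rewrite normrM ler_pM ?kappa_inv //; lra.
by rewrite normrM ler_pM ?kappa_inv.
Qed.

(* [1/q = 1/(max kappa q)] on the range of [e], and the latter is
   nonincreasing. *)
Lemma measurable_ipw_score d (Om : measurableType d) (R : realType) (kappa : R)
    (Y D : Om -> R) (X : Om -> R * R) (e : R * R -> R) : 0 < kappa ->
  measurable_fun setT Y -> measurable_fun setT D -> measurable_fun setT X ->
  measurable_fun setT e -> (forall x, kappa <= e x <= 1 - kappa) ->
  measurable_fun setT (ipw_score Y D X e).
Proof.
move=> kappa_gt0 mY mD mX me e_itv; pose inv q := (Num.max kappa q)^-1.
have minv : measurable_fun setT inv.
  apply: nonincreasing_measurable => // s t st.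
  by rewrite lef_pV2 ?posrE ?lt_max ?kappa_gt0 // le_max2.
have -> : ipw_score Y D X e =
    (fun w => Y w * D w * inv (e (X w)) - Y w * (1 - D w) * inv (1 - e (X w))).
  apply/funext => w; have /andP[e1 e2] := e_itv (X w).
  by rewrite /ipw_score /inv !max_r //; lra.
have meX : measurable_fun setT (e \o X) by exact: measurableT_comp.
apply: measurable_funB; apply: measurable_funM.
- exact: measurable_funM.
- exact: measurableT_comp.
- by apply: measurable_funM => //; apply: measurable_funB.
- by apply: measurableT_comp => //; apply: measurable_funB.
Qed.

Section WelfareGap.
Context d (Om : measurableType d) (R : realType) (P : probability Om R).
Variables (Y D : Om -> R) (X : Om -> R * R) (e : R * R -> R).
Variables (M kappa A : R) (dens : R * R -> R).
Hypotheses (kappa_gt0 : 0 < kappa) (mY : measurable_fun setT Y).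
Hypotheses (mD : measurable_fun setT D) (mX : measurable_fun setT X).
Hypothesis PY : P [set w | - (M / 2) <= Y w <= M / 2] = 1%E.
Hypothesis PD : P [set w | D w = 0 \/ D w = 1] = 1%E.
Hypothesis mdens : measurable_fun setT dens.
Hypothesis dens_bounded : forall x, 0 <= dens x <= A.
Hypothesis PX_density : forall B : set (R * R), measurable B ->
  P (X @^-1` B) =
  (\int[(@lebesgue_measure R \x @lebesgue_measure R)%E]_(x in B `&` unit_sq)
     (dens x)%:E)%E.
Hypothesis me : measurable_fun setT e.
Hypothesis e_itv : forall x, kappa <= e x <= 1 - kappa.

Let supportY := [set w | - (M / 2) <= Y w <= M / 2].
Let supportD := [set w | D w = 0 \/ D w = 1].

Let measurable_supportY : measurable supportY.
Proof.
have -> : supportY = Y @^-1` [set` `[- (M / 2), M / 2]].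
  by apply/seteqP; split => w; rewrite /= in_itv.
by rewrite -[X in measurable X]setTI; apply: mY => //; exact: measurable_itv.
Qed.

Let measurable_supportD : measurable supportD.
Proof.
have -> : supportD = D @^-1` ([set 0] `|` [set 1]) by [].
by rewrite -[X in measurable X]setTI; apply: mD => //; apply: measurableU.
Qed.

Let M_ge0 : 0 <= M.
Proof.
rewrite leNgt; apply/negP => M_lt0; move: PY.
have -> : [set w | - (M / 2) <= Y w <= M / 2] = set0.
  by apply/seteqP; split => w //= /andP[? ?]; lra.
by rewrite measure0 => /eqP; rewrite eqe eq_sym oner_eq0.
Qed.

Let score_bounded w : ~ (~` (supportY `&` supportD)) w ->
  `|ipw_score Y D X e w| <= M / 2 / kappa.
Proof.
move=> /contrapT[/andP[Ylo Yhi] Dw]; apply: ipw_score_le => //.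
by rewrite ler_norml Ylo.
Qed.

Lemma welfare_monotone_le_interp (T : nat) (f : R -> R) : (0 < T)%N ->
  (forall a b, 0 <= a -> a <= b -> b <= 1 -> f b <= f a) ->
  (forall a, 0 <= a <= 1 -> 0 <= f a <= 1) ->
  (welfare P Y D X e (unit_subgraph f) <=
     welfare P Y D X e (unit_subgraph (grid_interp T f))
     + (M / 2 / kappa * (A / T%:R))%:E)%E.
Proof.
move=> T_gt0 f_noninc f01.
have mX_pre B : measurable B -> measurable (X @^-1` B).
  by move=> mB; rewrite -[X in measurable X]setTI; apply: mX.
have c_ge0 : 0 <= M / 2 / kappa by rewrite !divr_ge0 // ltW.
(* [welfare P Y D X e G] is convertible to the integral of
   [ipw_score Y D X e w * \1_(X @^-1` G) w]. *)
apply: le_trans (@integral_mul_indic_le _ _ _ P (~` (supportY `&` supportD))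
  (M / 2 / kappa) _ _ c_ge0 _ (X @^-1` unit_subgraph f)
  (X @^-1` unit_subgraph (grid_interp T f)) (fun j => X @^-1` grid_cell T f j) T _
  score_bounded _ _ _ _) _.
- by apply: measurableC; apply: measurableI.
- exact: probability_setCI_eq0 measurable_supportY measurable_supportD PY PD.
- exact: measurable_ipw_score kappa_gt0 mY mD mX me e_itv.
- exact: mX_pre (measurable_monotone_subgraph f_noninc).
- exact: mX_pre (measurable_unit_subgraph (measurable_hat_interp _ _)).
- by move=> j; apply: mX_pre; apply: measurableX; exact: measurable_itv.
- by move=> w; exact: unit_subgraph_neq_cell T_gt0 f_noninc.
rewrite leeD2l // [in leRHS]EFinM; apply: lee_wpmul2l; first by rewrite lee_fin.
by have := grid_cells_prob_le mdens dens_bounded PX_density T_gt0 f_noninc f01.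
Qed.

Lemma opt_welfare_monotone_le_sieve (k : nat) : (1 <= k)%N ->
  (opt_welfare P Y D X e monotone_allocs <=
     opt_welfare P Y D X e (sieve_allocs k) + (A * (M / kappa) * 2 ^- k)%:E)%E.
Proof.
move=> k_ge1; set T := (2 ^ k.-1)%N.
have T_gt0 : (0 < T)%N by rewrite expn_gt0.
have gapE : M / 2 / kappa * (A / T%:R) = A * (M / kappa) * 2 ^- k.
  rewrite /T natrX -[in 2 ^- k](prednK k_ge1) exprS; field.
  by rewrite expf_neq0 ?pnatr_eq0 // lt0r_neq0.
apply: ge_ereal_sup => _ [_ [f [f_noninc [f01 ->]]] <-].
rewrite -gapE; apply: le_trans (welfare_monotone_le_interp T_gt0 f_noninc f01) _.
apply: leeD2r; apply: ereal_sup_ubound.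
exists (unit_subgraph (grid_interp T f)) => //.
by exists (fun j => f (j%:R / T%:R)); split => // j; exact: grid_noninc.
Qed.

End WelfareGap.

Theorem proposition5p1 (R : realType) (d : measure_display) (Om : measurableType d)
  (P : probability Om R) (Y D : Om -> R) (X : Om -> R * R) (e : R * R -> R)
  (M kappa A : R) (k : nat) :
  0 < kappa -> kappa < 1 / 2 -> 0 < A -> (1 <= k)%N ->
  measurable_fun setT Y -> measurable_fun setT D -> measurable_fun setT X ->
  (* support of Y in [-M/2, M/2] *)
  P [set w | - (M / 2) <= Y w <= M / 2] = 1%E ->
  (* D in {0,1} *)
  P [set w | D w = 0 \/ D w = 1] = 1%E ->
  (* X has a density w.r.t. Lebesgue measure on [0,1]^2, bounded above by A *)
  (exists f : R * R -> R, measurable_fun setT f /\ (forall x, 0 <= f x <= A) /\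
     forall B : set (R * R), measurable B ->
       P (X @^-1` B) =
       (\int[(@lebesgue_measure R \x @lebesgue_measure R)%E]_(x in B `&` unit_sq)
          (f x)%:E)%E) ->
  (* e is (a version of) the propensity score E[D | X], with values in [kappa, 1-kappa] *)
  measurable_fun setT e ->
  (forall x, kappa <= e x <= 1 - kappa) ->
  (forall B : set (R * R), measurable B ->
     (\int[P]_w (D w * \1_B (X w))%:E = \int[P]_w (e (X w) * \1_B (X w))%:E)%E) ->
  (opt_welfare P Y D X e monotone_allocs - opt_welfare P Y D X e (sieve_allocs k)
     <= (A * (M / kappa) * 2 ^- k)%:E)%E.
Proof.
move=> kappa_gt0 _ _ k_ge1 mY mD mX PY PD [dens [mdens [dens_bounded PX]]].
move=> me e_itv _.
apply: leeBlDr_EFin.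
by have := opt_welfare_monotone_le_sieve kappa_gt0 mY mD mX PY PD mdens
  dens_bounded PX me e_itv k_ge1.
Qed.
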